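(* Let $\eta,\delta,M$ be integers greater than $1$ and let $f$ be a positive integer, with $\gcd(\eta,\delta)=1$, such that $$M=\frac{\delta^{2}(3f^{2}-1)}{3(\eta+\delta)^{2}+\delta^{2}},$$ and such that there is an integer $a\geq1$ for which $\sum_{i=0}^{M-1}(a+i)^{2}$ is a perfect square. Then: (i) if $\delta\equiv 1$ or $5\pmod 6$, then $M\equiv 0\pmod{\delta^{2}}$; if $\delta\equiv 0\pmod 6$, then $M\equiv 0\pmod{\delta^{2}/3}$; (ii) if moreover $f\equiv 1\pmod 2$, then $M\equiv 0\pmod{2\delta^{2}}$ when $\delta\equiv 1$ or $5\pmod 6$, and $M\equiv 0\pmod{2\delta^{2}/3}$ when $\delta\equiv 0\pmod 6$.
   Context: Here $f=a_2-a_1$ is the difference of the first terms of a pair $(a_1,a_2)$ of positive integers with $a_1+a_2=(\eta/\delta)M+1$. It is known from earlier work (cited) that a sum of $M>1$ consecutive squares $\sum_{i=0}^{M-1}(a+i)^2$ with $a\ge1$ can be a perfect square only if $M\equiv 0$ or $24\pmod{72}$, or $M\equiv 1,2$ or $16\pmod{24}$, or $M\equiv 9$ or $33\pmod{72}$, or $M\equiv 11\pmod{12}$. *)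

From mathcomp Require Import all_boot.
Set Implicit Arguments. Unset Strict Implicit. Unset Printing Implicit Defensive.

Definition sum_consec_sq (a M : nat) : nat := \sum_(i < M) (a + i) ^ 2.

From mathcomp Require Import all_boot.
From mathcomp Require Import all_algebra ring zify.

(* Write D = 3 (eta + delta)^2 + delta^2, so that M * D = delta^2 (3 f^2 - 1).
   Modulo delta, D is 3 eta^2, hence D is coprime to delta when 3 does not
   divide delta, and Gauss's lemma gives delta^2 | M.  When delta = 6 c,
   D = 3 E with E = (eta + 6 c)^2 + 12 c^2 coprime to 6 c, and the same
   argument gives delta^2 / 3 = 12 c^2 | M.  For odd f, 3 f^2 - 1 = 2 q with
   q odd; the extra factor 2 then comes from a parity count: whenever D (or E)
   is odd it is coprime to 2, and the only remaining case (eta even, delta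
   odd) is impossible since then 4 | D while delta^2 (3 f^2 - 1) is 2 mod 4. *)

Lemma coprime_addMr d a b : coprime d (a + d * b) = coprime d a.
Proof. by rewrite -coprime_modr addnC mulnC modnMDl coprime_modr. Qed.

Lemma dvdn_of_mul_coprime n D M X : coprime n D -> M * D = n * X -> n %| M.
Proof. by move=> nD MDE; rewrite -(Gauss_dvdl _ nD) MDE dvdn_mulr. Qed.

Lemma odd_three_sqr_sub1 f : odd f -> exists2 q, odd q & 3 * f ^ 2 - 1 = 2 * q.
Proof.
move=> f_odd; have {f_odd} -> : f = 2 * f./2 + 1.
  by rewrite -[LHS]odd_double_half f_odd addnC -muln2 mulnC.
exists (6 * f./2 ^ 2 + 6 * f./2 + 1); first by rewrite addn1 /= oddD !oddM.
by rewrite -[X in _ = X](addnK 1); congr (_ - 1); ring.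
Qed.

Lemma dvd4_three_sqr_add_sqr x y : odd x -> odd y -> 4 %| 3 * x ^ 2 + y ^ 2.
Proof.
move=> x_odd y_odd.
rewrite -(odd_double_half x) -(odd_double_half y) x_odd y_odd !add1n -!muln2.
by apply/dvdnP; exists (3 * (x./2 ^ 2 + x./2) + (y./2 ^ 2 + y./2) + 1); ring.
Qed.

Section ExactQuotient.

Variables eta delta M f : nat.
Hypothesis eta_delta_coprime : coprime eta delta.
Hypothesis M_eq : M * (3 * (eta + delta) ^ 2 + delta ^ 2) = delta ^ 2 * (3 * f ^ 2 - 1).

Lemma coprime_delta_denom : coprime delta 3 ->
  coprime delta (3 * (eta + delta) ^ 2 + delta ^ 2).
Proof.
move=> delta3.
have -> : 3 * (eta + delta) ^ 2 + delta ^ 2 = 3 * eta ^ 2 + delta * (6 * eta + 4 * delta).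
  by ring.
by rewrite coprime_addMr coprimeMr delta3 coprimeXr // coprime_sym.
Qed.

Lemma sqr_delta_dvd_M : coprime delta 3 -> delta ^ 2 %| M.
Proof.
move=> delta3; apply: dvdn_of_mul_coprime M_eq.
by rewrite coprimeXl // coprime_delta_denom.
Qed.

Lemma double_sqr_delta_dvd_M : coprime delta 3 -> odd delta -> odd f ->
  2 * delta ^ 2 %| M.
Proof.
move=> delta3 delta_odd /odd_three_sqr_sub1 [q q_odd qE].
have [eta_odd | eta_even] := boolP (odd eta).
  have MqE : M * (3 * (eta + delta) ^ 2 + delta ^ 2) = 2 * delta ^ 2 * q.
    by rewrite M_eq qE; ring.
  apply: dvdn_of_mul_coprime MqE.
  rewrite coprimeMl coprimeXl ?coprime_delta_denom // andbT coprime2n.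
  by rewrite oddD oddM oddX oddD eta_odd delta_odd /= oddX delta_odd.
have : 4 %| delta ^ 2 * (3 * f ^ 2 - 1).
  rewrite -M_eq dvdn_mull // dvd4_three_sqr_add_sqr //.
  by rewrite oddD delta_odd (negbTE eta_even).
by rewrite qE mulnCA -[4]/(2 * 2) dvdn_pmul2l // dvdn2 oddM oddX delta_odd q_odd.
Qed.

End ExactQuotient.

Section DeltaMultipleOf6.

Variables eta c M f : nat.
Hypothesis eta_6c_coprime : coprime eta (6 * c).
Hypothesis M_eq :
  M * (3 * (eta + 6 * c) ^ 2 + (6 * c) ^ 2) = (6 * c) ^ 2 * (3 * f ^ 2 - 1).

Let E := (eta + 6 * c) ^ 2 + 12 * c ^ 2.

Lemma M_eq_div3 : M * E = 12 * c ^ 2 * (3 * f ^ 2 - 1).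
Proof.
apply/eqP; rewrite -(@eqn_pmul2l 3) //; apply/eqP.
move: (3 * f ^ 2 - 1) M_eq => X MX_eq.
have -> : 3 * (12 * c ^ 2 * X) = (6 * c) ^ 2 * X by ring.
by rewrite -MX_eq /E; ring.
Qed.

Lemma coprime_twelve_sqr_E : coprime (12 * c ^ 2) E.
Proof.
have cE : coprime (6 * c) E.
  have -> : E = eta ^ 2 + 6 * c * (2 * eta + 8 * c) by rewrite /E; ring.
  by rewrite coprime_addMr coprimeXr // coprime_sym.
apply: coprime_dvdl (coprimeXl 2 cE).
by apply/dvdnP; exists 3; ring.
Qed.

Lemma twelve_sqr_dvd_M : 12 * c ^ 2 %| M.
Proof. exact: dvdn_of_mul_coprime coprime_twelve_sqr_E M_eq_div3. Qed.

Lemma twentyfour_sqr_dvd_M : odd f -> 2 * (12 * c ^ 2) %| M.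
Proof.
move=> /odd_three_sqr_sub1 [q _ qE].
have MqE : M * E = 2 * (12 * c ^ 2) * q by rewrite M_eq_div3 qE; ring.
apply: dvdn_of_mul_coprime MqE.
rewrite coprimeMl coprime_twelve_sqr_E andbT coprime2n /E.
have eta_odd : odd eta.
  apply: contraLR eta_6c_coprime => eta_even.
  rewrite -dvdn2 in eta_even.
  apply/negP => /(coprime_dvdl eta_even).
  by move=> /(coprime_dvdr (dvdn_mulr c (isT : 2 %| 6))).
by rewrite oddD oddX oddD oddM eta_odd /= !oddM.
Qed.

End DeltaMultipleOf6.

Lemma delta_mod6_coprime3 delta : delta %% 6 = 1 \/ delta %% 6 = 5 ->
  coprime delta 3 /\ odd delta.
Proof.
move=> delta6; split; last by apply/negPn; rewrite -dvdn2; lia.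
by rewrite coprime_sym prime_coprime //; lia.
Qed.

Lemma delta_mod6_0 delta : delta %% 6 = 0 ->
  exists2 c, delta = 6 * c & delta ^ 2 %/ 3 = 12 * c ^ 2.
Proof.
move=> delta6; have deltaE : delta = 6 * (delta %/ 6).
  by rewrite {1}(divn_eq delta 6) delta6 addn0 mulnC.
exists (delta %/ 6) => //; rewrite {1}deltaE -(mulnK (12 * _) (isT : 0 < 3)).
by congr (_ %/ 3); ring.
Qed.

Theorem corollary2 (eta delta M f : nat) :
  1 < eta -> 1 < delta -> 1 < M -> 0 < f ->
  coprime eta delta ->
  (* M = delta^2 (3 f^2 - 1) / (3 (eta+delta)^2 + delta^2), as an exact quotient *)
  M * (3 * (eta + delta) ^ 2 + delta ^ 2) = delta ^ 2 * (3 * f ^ 2 - 1) ->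
  (exists a, 1 <= a /\ exists k, sum_consec_sq a M = k ^ 2) ->
  (* (i) *)
  ((delta %% 6 = 1 \/ delta %% 6 = 5) -> delta ^ 2 %| M) /\
  (delta %% 6 = 0 -> (delta ^ 2 %/ 3) %| M) /\
  (* (ii) *)
  (odd f ->
     ((delta %% 6 = 1 \/ delta %% 6 = 5) -> (2 * delta ^ 2) %| M) /\
     (delta %% 6 = 0 -> (2 * (delta ^ 2 %/ 3)) %| M)).
Proof.
move=> _ _ _ _ coprime_eta_delta M_eq _.
split; last split; last move=> f_odd; last split.
- by move=> /delta_mod6_coprime3 [delta3 _]; exact: sqr_delta_dvd_M M_eq delta3.
- move=> /delta_mod6_0 [c delta6 ->]; subst delta.
  exact: twelve_sqr_dvd_M coprime_eta_delta M_eq.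
- move=> /delta_mod6_coprime3 [delta3 delta_odd].
  exact: double_sqr_delta_dvd_M coprime_eta_delta M_eq delta3 delta_odd f_odd.
- move=> /delta_mod6_0 [c delta6 ->]; subst delta.
  exact: twentyfour_sqr_dvd_M coprime_eta_delta M_eq f_odd.
Qed.
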